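(* Let $f:\mathbb{R}^n\to\mathbb{R}$ be convex and differentiable with $\nabla f$ $L$-Lipschitz continuous, and assume $X^*$ is non-empty. Then the sequence $\{x^k\}$ generated by Algorithm 3 (with $\nabla f(x^k)\ne0$ for all $k$) satisfies, for every $x^*\in X^*$ and every integer $K\ge1$, $$\frac1K\sum_{k=0}^{K-1}\|\nabla f(x^k)\|^2\le\frac{\|x^0-x^*\|^2}{K\kappa_4h_{\min}^2},$$ where $\alpha_{\min}=\frac{(1-\beta)\left(1-\frac{L\overline{h}}{4}\right)+\beta(1-\nu)}{2+2\beta^2\nu^2}$, $\kappa_4=\eta(2-\eta)\alpha_{\min}\left((1-\beta)\left(1-\frac{L\overline{h}}{4}\right)+\beta(1-\nu)\right)$ and $h_{\min}=\min\left\{\underline{h},\frac{\nu\theta}{\overline{h}\max\{L,1\}^2}\right\}$.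
   Context: $X^*=\{x:\nabla f(x)=0\}$ (the set of minimizers of the convex $f$). Algorithm 3: parameters $0<\mu<\nu<1$, $0<\underline{h}<1\le\gamma_0^0\le\overline{h}<\frac4L$, $0\le\beta\le1$, $\theta\in(0,1)$, $\tau>1$, $\eta\in(0,2)$, starting point $x^0$; run while $\nabla f(x^k)\neq0$. At iteration $k$: for $\gamma>0$ let $z^k(\gamma)=x^k-\gamma\nabla f(x^k)$ and $r_k(\gamma)=\gamma\|\nabla f(z^k(\gamma))-\nabla f(x^k)\|/\|z^k(\gamma)-x^k\|$; starting from $\gamma_0^k$, while $r_k(\gamma_l^k)>\nu$ set $\gamma_{l+1}^k=\gamma_l^k\theta\min\{1,1/r_k(\gamma_l^k)\}$; let $h_k$ be the first $\gamma_l^k$ with $r_k(\gamma_l^k)\le\nu$. Then $z^k=x^k-h_k\nabla f(x^k)$ and $x^{k+1}=x^k-\eta\alpha_kh_k\big(\nabla f(x^k)-\beta(\nabla f(x^k)-\nabla f(z^k))\big)$ with $$\alpha_k=\frac{(1-\beta)\left(1-\frac{Lh_k}{4}\right)\|x^k-z^k\|^2+\beta\langle x^k-z^k,h_k\nabla f(z^k)\rangle}{h_k^2\|\nabla f(x^k)-\beta(\nabla f(x^k)-\nabla f(z^k))\|^2};$$ finally $\gamma_0^{k+1}=\mathbf{P}_{[\underline{h},\overline{h}]}(\tau h_k)$ if $r_k(h_k)\le\mu$, else $\gamma_0^{k+1}=\mathbf{P}_{[\underline{h},\overline{h}]}(h_k)$, where $\mathbf{P}_{[a,b]}$ is projection onto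 $[a,b]$. *)

From HB Require Import structures.
From mathcomp Require Import all_boot all_order all_algebra.
From mathcomp Require Import all_classical all_reals all_analysis.
Set Implicit Arguments. Unset Strict Implicit. Unset Printing Implicit Defensive.
Import Order.TTheory GRing.Theory Num.Theory.
Import numFieldNormedType.Exports.
Local Open Scope ring_scope.

Section Defs.
Variables (R : realType) (n : nat).
Local Notation vec := 'rV[R]_n.

Definition dotv (u v : vec) : R := \sum_(i < n) u 0 i * v 0 i.
Definition enorm (v : vec) : R := Num.sqrt (dotv v v).

Definition convex_fun (f : vec -> R) : Prop :=
  forall (x y : vec) (t : R), 0 <= t <= 1 ->
    f (t *: x + (1 - t) *: y) <= t * f x + (1 - t) * f y.

Definition has_gradient (f : vec -> R) (gf : vec -> vec) : Prop :=
  forall x : vec, differentiable f x /\ forall v : vec, 'd f x v = dotv (gf x) v.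

Definition lipschitz_grad (gf : vec -> vec) (L : R) : Prop :=
  forall x y : vec, enorm (gf x - gf y) <= L * enorm (x - y).

Definition minimizer_set (gf : vec -> vec) : set vec := [set x | gf x = 0].

Definition zpt (gf : vec -> vec) (x : vec) (g : R) : vec := x - g *: gf x.
Definition ratio (gf : vec -> vec) (x : vec) (g : R) : R :=
  g * enorm (gf (zpt gf x g) - gf x) / enorm (zpt gf x g - x).

Fixpoint trial (gf : vec -> vec) (x : vec) (theta g0 : R) (l : nat) : R :=
  match l with
  | 0 => g0
  | l'.+1 => let g := trial gf x theta g0 l' in
             g * theta * Num.min 1 (1 / ratio gf x g)
  end.

Definition projI (a b t : R) : R := Num.max a (Num.min b t).

Definition alpha_k (gf : vec -> vec) (L beta : R) (x : vec) (h : R) : R :=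
  let z := zpt gf x h in
  let d := gf x - beta *: (gf x - gf z) in
  ((1 - beta) * (1 - L * h / 4) * enorm (x - z) ^+ 2
     + beta * dotv (x - z) (h *: gf z))
  / (h ^+ 2 * enorm d ^+ 2).

(* (x, g0, h) are the sequences x^k, gamma_0^k, h_k generated by Algorithm 3
   from x^0 = x0 and gamma_0^0 = g00, with grad f(x^k) <> 0 for all k. *)
Definition algorithm3 (gf : vec -> vec) (L mu nu hlo hhi beta theta tau eta : R)
  (x0 : vec) (g00 : R) (x : nat -> vec) (g0 h : nat -> R) : Prop :=
  x 0%N = x0 /\ g0 0%N = g00 /\
  forall k : nat,
    gf (x k) != 0 /\
    (exists m : nat,
       (forall l : nat, (l < m)%N -> ratio gf (x k) (trial gf (x k) theta (g0 k) l) > nu)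
       /\ ratio gf (x k) (trial gf (x k) theta (g0 k) m) <= nu
       /\ h k = trial gf (x k) theta (g0 k) m) /\
    x k.+1 = x k - (eta * alpha_k gf L beta (x k) (h k) * h k)
                     *: (gf (x k) - beta *: (gf (x k) - gf (zpt gf (x k) (h k)))) /\
    g0 k.+1 = (if ratio gf (x k) (h k) <= mu then projI hlo hhi (tau * h k)
               else projI hlo hhi (h k)).

End Defs.

(* Write g = grad f(x^k), z = z^k, d = g - beta (g - grad f(z)) and u = x^k - x^*.
   Co-coercivity of the gradient at the minimizer x^* and its monotonicity at z give
   h_k <d, u> >= N_k, where N_k is the numerator of alpha_k; since alpha_k h_k^2 |d|^2 = N_k,
   the update satisfies |x^{k+1} - x^*|^2 <= |u|^2 - eta (2 - eta) alpha_k N_k.  The acceptance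
   test r_k(h_k) <= nu means |grad f(z) - g| <= nu |g|, which yields
   N_k >= C h_k^2 |g|^2 and |d|^2 <= (2 + 2 beta^2 nu^2) |g|^2, hence alpha_k >= alpha_min
   (C being the numerator of alpha_min).  Backtracking never shrinks a step below
   min {gamma_0^k, theta nu / L} >= h_min, and summing the resulting decrease
   |x^{k+1} - x^*|^2 <= |x^k - x^*|^2 - kappa_4 h_min^2 |grad f(x^k)|^2 over k < K gives the bound. *)

From Pilot Require Import Defs.
From HB Require Import structures.
From mathcomp Require Import all_boot all_order all_algebra.
From mathcomp Require Import all_classical all_reals all_analysis.
From mathcomp Require Import ring lra.
Import Order.TTheory GRing.Theory Num.Theory.
Import numFieldNormedType.Exports.
Local Open Scope ring_scope.

Section EuclideanInnerProduct.
Context {R : realType} {n : nat}.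
Implicit Types (u v w : 'rV[R]_n) (a : R).

Lemma dotvC u v : dotv u v = dotv v u.
Proof. by apply: eq_bigr => i _; rewrite mulrC. Qed.

Lemma dotvDl u v w : dotv (u + v) w = dotv u w + dotv v w.
Proof. by rewrite /dotv -big_split; apply: eq_bigr => i _; rewrite !mxE mulrDl. Qed.

Lemma dotvZl a u v : dotv (a *: u) v = a * dotv u v.
Proof. by rewrite /dotv mulr_sumr; apply: eq_bigr => i _; rewrite !mxE mulrA. Qed.

Lemma dotvNl u v : dotv (- u) v = - dotv u v.
Proof. by rewrite -scaleN1r dotvZl mulN1r. Qed.

Lemma dotvBl u v w : dotv (u - v) w = dotv u w - dotv v w.
Proof. by rewrite dotvDl dotvNl. Qed.

Lemma dotvDr u v w : dotv u (v + w) = dotv u v + dotv u w.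
Proof. by rewrite dotvC dotvDl !(dotvC u). Qed.

Lemma dotvZr a u v : dotv u (a *: v) = a * dotv u v.
Proof. by rewrite dotvC dotvZl dotvC. Qed.

Lemma dotvNr u v : dotv u (- v) = - dotv u v.
Proof. by rewrite dotvC dotvNl dotvC. Qed.

Lemma dotvBr u v w : dotv u (v - w) = dotv u v - dotv u w.
Proof. by rewrite dotvDr dotvNr. Qed.

Lemma dotv0l v : dotv 0 v = 0.
Proof. by rewrite -(scale0r 0) dotvZl mul0r. Qed.

Lemma dotv_ge0 u : 0 <= dotv u u.
Proof. by apply: sumr_ge0 => i _; rewrite -expr2 sqr_ge0. Qed.

Lemma dotv_eq0 u : (dotv u u == 0) = (u == 0).
Proof.
apply/idP/eqP => [|->]; last by rewrite dotv0l.
rewrite psumr_eq0 => [/allP u0|i _]; last by rewrite -expr2 sqr_ge0.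
apply/rowP => i; have := u0 i (mem_index_enum i).
by rewrite mxE -expr2 sqrf_eq0 => /eqP.
Qed.

Lemma enorm_ge0 u : 0 <= enorm u.
Proof. exact: sqrtr_ge0. Qed.

Lemma enorm_sqr u : enorm u ^+ 2 = dotv u u.
Proof. by rewrite sqr_sqrtr // dotv_ge0. Qed.

Lemma enorm_gt0 u : u != 0 -> 0 < enorm u.
Proof. by move=> u0; rewrite sqrtr_gt0 lt_def dotv_eq0 u0 dotv_ge0. Qed.

Lemma enormZ a u : enorm (a *: u) = `|a| * enorm u.
Proof. by rewrite /enorm dotvZl dotvZr mulrA -expr2 sqrtrM ?sqr_ge0 // sqrtr_sqr. Qed.

Lemma enormN u : enorm (- u) = enorm u.
Proof. by rewrite /enorm dotvNl dotvNr opprK. Qed.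

Lemma enorm_sqrB u v a :
  enorm (u - a *: v) ^+ 2 = enorm u ^+ 2 - 2 * a * dotv v u + a ^+ 2 * enorm v ^+ 2.
Proof. by rewrite !enorm_sqr !(dotvBl, dotvBr, dotvZl, dotvZr) (dotvC u v); ring. Qed.

(* The parallelogram law, with the term [enorm (u - v) ^+ 2] dropped. *)
Lemma enorm_sqrD_le u v : enorm (u + v) ^+ 2 <= 2 * enorm u ^+ 2 + 2 * enorm v ^+ 2.
Proof.
have := dotv_ge0 (u - v); rewrite !enorm_sqr !(dotvDl, dotvDr, dotvNl, dotvNr) (dotvC v u).
lra.
Qed.

Lemma cauchy_schwarz_sqr u v : dotv u v ^+ 2 <= dotv u u * dotv v v.
Proof.
have [->|v0] := eqVneq v 0; first by rewrite dotvC !dotv0l expr0n mulr0.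
have vv0 : 0 < dotv v v by rewrite -enorm_sqr exprn_gt0 // enorm_gt0.
have := dotv_ge0 (dotv v v *: u - dotv u v *: v).
rewrite !(dotvBl, dotvBr, dotvZl, dotvZr) (dotvC v u) => w0.
have : 0 <= dotv v v * (dotv v v * dotv u u - dotv u v ^+ 2).
  by move: w0; congr (_ <= _); ring.
by rewrite pmulr_rge0 // subr_ge0 mulrC.
Qed.

Lemma cauchy_schwarz u v : `|dotv u v| <= enorm u * enorm v.
Proof.
rewrite -(@ler_pXn2r _ 2) // ?nnegrE ?mulr_ge0 ?enorm_ge0 //.
by rewrite real_normK ?num_real // exprMn !enorm_sqr cauchy_schwarz_sqr.
Qed.

End EuclideanInnerProduct.

Lemma is_derive_line (R : realType) (n : nat) (f : 'rV[R]_n -> R) x v (c : R) :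
  differentiable f (x + c *: v) ->
  is_derive c 1 (fun t => f (x + t *: v)) ('d f (x + c *: v) v).
Proof.
move=> df.
have shiftE : (fun h : R => h^-1 *: (((fun t => f (x + t *: v)) \o shift c) (h *: 1)
     - f (x + c *: v))) =
   (fun h => h^-1 *: ((f \o shift (x + c *: v)) (h *: v) - f (x + c *: v))).
  apply/funext => h /=; congr (_ *: (f _ - _)).
  by rewrite [h *: 1]mulr1 scalerDl addrCA addrA.
split; first by rewrite /derivable shiftE; exact: diff_derivable.
by rewrite /derive shiftE -/(derive f _ v); exact: deriveE.
Qed.

Section SmoothConvex.
Local Open Scope classical_set_scope.
Context {R : realType} {n : nat} {f : 'rV[R]_n -> R} {gf : 'rV[R]_n -> 'rV[R]_n}.
Hypothesis f_grad : has_gradient f gf.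
Implicit Types (x y z xs : 'rV[R]_n).

Lemma convex_gradient_ineq x y : convex_fun f -> f x + dotv (gf x) (y - x) <= f y.
Proof.
move=> f_cvx; set v := y - x.
have [dfx dfE] := f_grad x.
have dv : derivable f x v := diff_derivable dfx.
(* The one-sided difference quotients at [0^'+] converge to the directional derivative
   and, by convexity, are bounded by [f y - f x]. *)
have quot_right : (fun t : R => t^-1 *: ((f \o shift x) (t *: v) - f x)) @ 0^'+ -->
    'D_v f x.
  apply: cvg_trans dv; apply: cvg_app => P /=.
  rewrite /dnbhs /at_right /within /=.
  change ((\forall t \near nbhs (0:R), t != 0 -> P t) ->
          (\forall t \near nbhs (0:R), 0 < t -> P t)).
  by move=> /filterS; apply => t Pt t0; apply: Pt; exact: lt0r_neq0.
have : 'D_v f x <= f y - f x.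
  apply: (cvgr_to_le quot_right); near=> t.
  have t0 : 0 < t by near: t; exact: nbhs_right_gt.
  have t1 : t <= 1 by near: t; exact: nbhs_right_le.
  have := f_cvx y x t; rewrite t1 ltW //= => /(_ isT) cvx_t.
  have -> : t *: v + x = t *: y + (1 - t) *: x.
    by rewrite /v scalerBr scalerBl scale1r -addrA [- _ + _]addrC.
  rewrite [_ *: _]mulrC ler_pdivrMr // mulrC; lra.
by rewrite (deriveE _ dfx) dfE lerBrDl.
Unshelve. all: by end_near.
Qed.

Lemma gradient_monotone_min z xs : convex_fun f -> gf xs = 0 ->
  0 <= dotv (gf z) (z - xs).
Proof.
move=> f_cvx gxs.
have := convex_gradient_ineq z xs f_cvx; have := convex_gradient_ineq xs z f_cvx.
by rewrite gxs dotv0l -opprB dotvNr; lra.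
Qed.

Context {L : R}.
Hypothesis gf_lip : lipschitz_grad gf L.

(* Mean value theorem for [t |-> f (x + t v) - t <grad f x, v> - t^2 L |v|^2 / 2] on [0, 1],
   whose derivative is nonpositive by Cauchy-Schwarz and the Lipschitz bound. *)
Lemma lipschitz_gradient_upper x y :
  f y <= f x + dotv (gf x) (y - x) + L / 2 * enorm (y - x) ^+ 2.
Proof.
set v := y - x; set a := dotv (gf x) v; set b := L / 2 * enorm v ^+ 2.
pose psi := (fun t => f (x + t *: v)) -
  (a \*: (@idfun R) + b \*: ((@idfun R) * (@idfun R))).
have psi'E c : is_derive c (1:R) psi
    ('d f (x + c *: v) v - (a *: (1:R) + b *: (c *: (1:R) + c *: 1))).
  by apply: is_deriveB; exact: is_derive_line (f_grad _).1.
have psi_cont : {within `[0, 1], continuous psi}.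
  by apply: derivable_within_continuous => t _; have [] := psi'E t.
have [c c01 mvt] := MVT_segment (@ler01 R) (fun c _ => psi'E c) psi_cont.
have c0 : 0 <= c by move: c01; rewrite in_itv /= => /andP[].
have sA r : r%:A = r :> R by exact: mulr1.
have sZ r s : r *: s = r * s :> R by [].
have psi'_le0 : 'd f (x + c *: v) v - (a%:A + b *: (c%:A + c%:A)) <= 0.
  rewrite (f_grad _).2 /a !sA sZ.
  have /ler_normlP[_] := cauchy_schwarz (gf (x + c *: v) - gf x) v.
  rewrite dotvBl => cs.
  have := gf_lip (x + c *: v) x.
  rewrite addrAC subrr add0r enormZ ger0_norm // => lip.
  have := ler_wpM2r (enorm_ge0 v) lip.
  have -> : b * (c + c) = L * (c * enorm v) * enorm v by rewrite /b; field.
  lra.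
have psiE t : psi t = f (x + t *: v) - (a * t + b * (t * t)) by [].
have xvE : x + v = y by rewrite addrC subrK.
move: mvt psi'_le0; rewrite !psiE scale1r xvE scale0r addr0 !sA !sZ.
rewrite !mulr1 !mulr0 subr0; lra.
Qed.

(* Co-coercivity of the gradient against a minimizer: compare [f] at [x - g / L] and
   [xs + g / L], [g = gf x], using the upper bound above and the gradient inequality. *)
Lemma gradient_cocoercive_min x xs : convex_fun f -> 0 < L -> gf xs = 0 ->
  enorm (gf x) ^+ 2 / L <= dotv (gf x) (x - xs).
Proof.
move=> f_cvx L0 gxs; set g := gf x; set G := enorm g ^+ 2.
have up_x := lipschitz_gradient_upper x (x - L^-1 *: g).
have up_xs := lipschitz_gradient_upper xs (xs + L^-1 *: g).
have low_xs := convex_gradient_ineq xs (x - L^-1 *: g) f_cvx.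
have low_x := convex_gradient_ineq x (xs + L^-1 *: g) f_cvx.
have dx : x - L^-1 *: g - x = - (L^-1 *: g) by rewrite addrAC subrr add0r.
have dxs : xs + L^-1 *: g - xs = L^-1 *: g by rewrite addrAC subrr add0r.
have dlow : dotv g (xs + L^-1 *: g - x) = L^-1 * G - dotv g (x - xs).
  by rewrite /G enorm_sqr !(dotvDr, dotvNr, dotvZr); ring.
have dup : dotv g (- (L^-1 *: g)) = - (L^-1 * G) by rewrite dotvNr dotvZr /G enorm_sqr.
have quad : L / 2 * (L^-1 * enorm g) ^+ 2 = G / L / 2 by rewrite /G; field; lra.
move: up_x up_xs low_xs low_x.
rewrite gxs !dotv0l !addr0 dx dxs enormN !enormZ (ger0_norm (_ : 0 <= L^-1)).
  by rewrite -/g dlow dup quad [L^-1 * G]mulrC; lra.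
by rewrite invr_ge0 ltW.
Qed.

End SmoothConvex.

Lemma alpha_denom_gt0 {R : realFieldType} (beta nu : R) : 0 < 2 + 2 * beta ^+ 2 * nu ^+ 2.
Proof. by have := sqr_ge0 (beta * nu); rewrite exprMn; lra. Qed.

Lemma descent_const_gt0 {R : realFieldType} {L hhi beta nu : R} :
  0 < L -> L * hhi < 4 -> 0 <= beta <= 1 -> nu < 1 ->
  0 < (1 - beta) * (1 - L * hhi / 4) + beta * (1 - nu).
Proof.
move=> L0 Lh /andP[b0 b1] nu1.
have Lh4 : 0 < 1 - L * hhi / 4 by rewrite subr_gt0 ltr_pdivrMr //; lra.
have : 0 <= beta * (1 - nu) by apply: mulr_ge0; lra.
have : 0 <= (1 - beta) * (1 - L * hhi / 4) by apply: mulr_ge0; lra.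
(* the weights [1 - beta] and [beta] cannot both be small *)
have [b_small|b_large] := lerP beta (1 / 2).
  have : 0 <= (1 / 2 - beta) * (1 - L * hhi / 4) by apply: mulr_ge0; lra.
  lra.
have : 0 <= (beta - 1 / 2) * (1 - nu) by apply: mulr_ge0; lra.
lra.
Qed.

Definition search_dir {R : realType} {n : nat} (gf : 'rV[R]_n -> 'rV[R]_n) (beta : R)
    (x : 'rV[R]_n) (h : R) : 'rV[R]_n :=
  gf x - beta *: (gf x - gf (zpt gf x h)).

Definition alpha_num {R : realType} {n : nat} (gf : 'rV[R]_n -> 'rV[R]_n) (L beta : R)
    (x : 'rV[R]_n) (h : R) : R :=
  let z := zpt gf x h in
  (1 - beta) * (1 - L * h / 4) * enorm (x - z) ^+ 2 + beta * dotv (x - z) (h *: gf z).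

Section Algorithm3Step.
Context {R : realType} {n : nat} {gf : 'rV[R]_n -> 'rV[R]_n} {L beta : R} {x : 'rV[R]_n}.
Implicit Types (h nu : R).

Local Notation g := (gf x).
Local Notation z h := (zpt gf x h).
Local Notation d h := (search_dir gf beta x h).
Local Notation N h := (alpha_num gf L beta x h).

Lemma alpha_kE h : alpha_k gf L beta x h = N h / (h ^+ 2 * enorm (d h) ^+ 2).
Proof. by []. Qed.

Lemma subr_zpt h : x - z h = h *: g.
Proof. by rewrite /zpt opprB addrC subrK. Qed.

Lemma enorm_zptB h : 0 <= h -> enorm (z h - x) = h * enorm g.
Proof. by move=> h0; rewrite -opprB subr_zpt enormN enormZ ger0_norm. Qed.

Lemma alpha_numE h :
  N h = h ^+ 2 * ((1 - beta) * (1 - L * h / 4) * enorm g ^+ 2 + beta * dotv g (gf (z h))).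
Proof. by rewrite /alpha_num subr_zpt !enorm_sqr !(dotvZl, dotvZr); ring. Qed.

Lemma ratio_le_lipschitz h : lipschitz_grad gf L -> g != 0 -> 0 < h -> Defs.ratio gf x h <= h * L.
Proof.
move=> gf_lip g0 h0.
have zx0 : 0 < enorm (z h - x) by rewrite (enorm_zptB _ (ltW h0)) mulr_gt0 // enorm_gt0.
rewrite /Defs.ratio ler_pdivrMr // -mulrA; apply: ler_wpM2l; [exact: ltW | exact: gf_lip].
Qed.

Lemma ratio_le_gradB h nu : g != 0 -> 0 < h -> Defs.ratio gf x h <= nu ->
  enorm (gf (z h) - g) <= nu * enorm g.
Proof.
move=> g0 h0; rewrite /Defs.ratio (enorm_zptB _ (ltW h0)) ler_pdivrMr ?mulr_gt0 ?enorm_gt0 //.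
by rewrite mulrCA (ler_pM2l h0).
Qed.

Lemma alpha_num_ge h hhi nu : 0 <= L -> 0 <= beta <= 1 -> 0 <= h -> h <= hhi ->
  enorm (gf (z h) - g) <= nu * enorm g ->
  ((1 - beta) * (1 - L * hhi / 4) + beta * (1 - nu)) * (h ^+ 2 * enorm g ^+ 2) <= N h.
Proof.
move=> L0 /andP[b0 b1] h0 hh close.
have /ler_normlP[cs _] := cauchy_schwarz g (gf (z h) - g).
have close_g : enorm g * enorm (gf (z h) - g) <= nu * enorm g ^+ 2.
  by rewrite expr2 mulrCA; apply: ler_wpM2l; [exact: enorm_ge0 | exact: close].
have dot_ge : (1 - nu) * enorm g ^+ 2 <= dotv g (gf (z h)).
  by move: cs; rewrite dotvBr -enorm_sqr; lra.
have step_le : 1 - L * hhi / 4 <= 1 - L * h / 4 by have := ler_wpM2l L0 hh; lra.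
have b1' : 0 <= 1 - beta by rewrite subr_ge0.
have := lerD (ler_wpM2l b1' (ler_wpM2r (sqr_ge0 (enorm g)) step_le)) (ler_wpM2l b0 dot_ge).
move/(ler_wpM2l (sqr_ge0 h)); rewrite alpha_numE; lra.
Qed.

Lemma enorm_search_dir_le h nu : enorm (gf (z h) - g) <= nu * enorm g ->
  enorm (d h) ^+ 2 <= (2 + 2 * beta ^+ 2 * nu ^+ 2) * enorm g ^+ 2.
Proof.
move=> close; have gz0 := enorm_ge0 (gf (z h) - g).
have close_sqr : enorm (gf (z h) - g) ^+ 2 <= nu ^+ 2 * enorm g ^+ 2.
  by rewrite -exprMn ler_sqr ?nnegrE //; exact: le_trans close.
have -> : d h = g + beta *: (gf (z h) - g) by rewrite /search_dir -scalerN opprB.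
apply: le_trans (enorm_sqrD_le _ _) _.
rewrite enormZ exprMn real_normK ?num_real //.
have := ler_wpM2l (sqr_ge0 beta) close_sqr; lra.
Qed.

Lemma alpha_k_ge h hhi nu : 0 < L -> L * hhi < 4 -> 0 <= beta <= 1 -> nu < 1 ->
  0 < h -> h <= hhi -> enorm (gf (z h) - g) <= nu * enorm g -> d h != 0 ->
  ((1 - beta) * (1 - L * hhi / 4) + beta * (1 - nu)) / (2 + 2 * beta ^+ 2 * nu ^+ 2)
    <= alpha_k gf L beta x h.
Proof.
move=> L0 Lh b01 nu1 h0 hh close d0.
have C0 := descent_const_gt0 L0 Lh b01 nu1.
have D0 := alpha_denom_gt0 beta nu.
have h2 : 0 <= h ^+ 2 := sqr_ge0 h.
rewrite alpha_kE ler_pdivlMr ?mulr_gt0 ?exprn_gt0 ?enorm_gt0 //.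
apply: le_trans (alpha_num_ge _ _ _ (ltW L0) b01 (ltW h0) hh close).
apply: le_trans (ler_wpM2l (divr_ge0 (ltW C0) (ltW D0))
  (ler_wpM2l h2 (enorm_search_dir_le _ _ close))) _.
by rewrite le_eqVlt; apply/orP; left; apply/eqP; field; rewrite gt_eqF.
Qed.

Section ConvexStep.
Context {f : 'rV[R]_n -> R} {xs : 'rV[R]_n}.
Hypotheses (f_cvx : convex_fun f) (f_grad : has_gradient f gf)
  (gf_lip : lipschitz_grad gf L) (L_gt0 : 0 < L) (xs_min : gf xs = 0).

(* [(1 - L h / 4) h L <= 1] for every [h], as [(1 - L h / 2) ^ 2 >= 0]. *)
Lemma gradient_dot_ge h : 0 <= h ->
  (1 - L * h / 4) * h * enorm g ^+ 2 <= dotv g (x - xs).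
Proof.
move=> h0; apply: le_trans (gradient_cocoercive_min f_grad gf_lip x xs f_cvx L_gt0 xs_min).
have -> : (1 - L * h / 4) * h * enorm g ^+ 2 = ((1 - L * h / 4) * h * L) * (enorm g ^+ 2 / L).
  by field; rewrite gt_eqF.
apply: ler_piMl; first by rewrite divr_ge0 ?sqr_ge0 ?ltW.
have := sqr_ge0 (1 - L * h / 2); lra.
Qed.

Lemma alpha_num_le_dot h : 0 <= h -> 0 <= beta <= 1 ->
  N h <= h * dotv (d h) (x - xs).
Proof.
move=> h0 /andP[b0 b1].
have gz_dot : h * dotv g (gf (z h)) <= dotv (gf (z h)) (x - xs).
  have -> : x - xs = (z h - xs) + h *: g by rewrite -subr_zpt [RHS]addrC [RHS]addrA subrK.
  rewrite dotvDr dotvZr dotvC lerDr.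
  exact: gradient_monotone_min f_grad (z h) xs f_cvx xs_min.
have b1' : 0 <= 1 - beta by rewrite subr_ge0.
have := ler_wpM2l h0 (lerD (ler_wpM2l b1' (gradient_dot_ge _ h0)) (ler_wpM2l b0 gz_dot)).
rewrite /search_dir alpha_numE !(dotvBl, dotvZl); lra.
Qed.

Lemma algorithm3_dist_sqr_le h hhi nu eta : g != 0 -> 0 < h <= hhi -> L * hhi < 4 ->
  0 <= beta <= 1 -> nu < 1 -> 0 <= eta <= 2 -> Defs.ratio gf x h <= nu ->
  enorm (x - (eta * alpha_k gf L beta x h * h) *: d h - xs) ^+ 2 <=
  enorm (x - xs) ^+ 2 - eta * (2 - eta) *
    (((1 - beta) * (1 - L * hhi / 4) + beta * (1 - nu)) / (2 + 2 * beta ^+ 2 * nu ^+ 2)) *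
    ((1 - beta) * (1 - L * hhi / 4) + beta * (1 - nu)) * h ^+ 2 * enorm g ^+ 2.
Proof.
move=> g0 /andP[h0 hh] Lh b01 nu1 /andP[e0 e2] rat.
have close := ratio_le_gradB _ _ g0 h0 rat.
have C0 := descent_const_gt0 L_gt0 Lh b01 nu1.
have D0 := alpha_denom_gt0 beta nu.
have hG0 : 0 < h ^+ 2 * enorm g ^+ 2 by rewrite mulr_gt0 ?exprn_gt0 ?enorm_gt0.
have N_ge := alpha_num_ge _ _ _ (ltW L_gt0) b01 (ltW h0) hh close.
have N_le := alpha_num_le_dot _ (ltW h0) b01.
have N0 := lt_le_trans (mulr_gt0 C0 hG0) N_ge.
have d0 : d h != 0.
  by apply/eqP => d0; move: N_le; rewrite d0 dotv0l mulr0; lra.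
have al_ge := alpha_k_ge _ _ _ L_gt0 Lh b01 nu1 h0 hh close d0.
have al0 := le_trans (divr_ge0 (ltW C0) (ltW D0)) al_ge.
have alE : alpha_k gf L beta x h * (h ^+ 2 * enorm (d h) ^+ 2) = N h.
  by rewrite alpha_kE divfK // mulf_neq0 ?expf_neq0 ?gt_eqF ?enorm_gt0.
rewrite addrAC enorm_sqrB.
move: (alpha_k gf L beta x h) al0 al_ge alE => a a0 a_ge aE.
(* [alpha_k] is chosen so that the quadratic term equals [eta ^+ 2 * a * N h], while the
   linear term is at least [2 * eta * a * N h]. *)
have quad : (eta * a * h) ^+ 2 * enorm (d h) ^+ 2 = eta ^+ 2 * a * N h.
  by rewrite -aE; ring.
have ea0 : 0 <= 2 * eta * a by rewrite !mulr_ge0.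
have e20 : 0 <= eta * (2 - eta) by rewrite mulr_ge0 ?subr_ge0.
have := ler_wpM2l ea0 N_le.
have := ler_wpM2l e20
  (ler_pM (divr_ge0 (ltW C0) (ltW D0)) (mulr_ge0 (ltW C0) (ltW hG0)) a_ge N_ge).
rewrite quad; lra.
Qed.

End ConvexStep.
End Algorithm3Step.

Lemma backtrack_step_bounds {R : realFieldType} {t r nu theta L : R} :
  0 < t -> 0 < nu -> nu < 1 -> 0 < theta < 1 -> nu < r -> r <= t * L ->
  [/\ 0 < t * theta * Num.min 1 (1 / r), t * theta * Num.min 1 (1 / r) <= t
    & theta * nu / L <= t * theta * Num.min 1 (1 / r)].
Proof.
move=> t0 nu0 nu1 /andP[th0 th1] nur rL.
have r0 : 0 < r := lt_trans nu0 nur.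
have tL0 : 0 < t * L := lt_le_trans r0 rL.
have m0 : 0 < Num.min 1 (1 / r) by rewrite lt_min ltr01 divr_gt0.
have m1 : Num.min 1 (1 / r) <= 1 by rewrite ge_min lexx.
have L0 : 0 < L by rewrite -(pmulr_rgt0 _ t0).
split; first by rewrite !mulr_gt0.
  rewrite -mulrA; apply: ler_piMr; first exact: ltW.
  by have := ler_wpM2l (ltW th0) m1; lra.
have ratio_le : nu / (t * L) <= Num.min 1 (1 / r).
  rewrite le_min !ler_pdivrMr // mul1r; apply/andP; split; first lra.
  rewrite mulrC ler_pdivlMr //.
  by have := ler_wpM2r (ltW r0) (ltW nu1); lra.
have -> : theta * nu / L = t * theta * (nu / (t * L)) by field; rewrite !gt_eqF.
by apply: ler_wpM2l ratio_le; rewrite mulr_ge0 ?ltW.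
Qed.

Lemma trial_bounds {R : realType} {n : nat} {gf : 'rV[R]_n -> 'rV[R]_n} {L nu theta : R}
    {x : 'rV[R]_n} {g0 : R} {m : nat} :
  lipschitz_grad gf L -> gf x != 0 -> 0 < nu -> nu < 1 -> 0 < theta < 1 -> 0 < g0 ->
  (forall l, (l < m)%N -> nu < Defs.ratio gf x (trial gf x theta g0 l)) ->
  forall l, (l <= m)%N ->
  [/\ 0 < trial gf x theta g0 l, trial gf x theta g0 l <= g0
    & Num.min g0 (theta * nu / L) <= trial gf x theta g0 l].
Proof.
move=> gf_lip gx nu0 nu1 th01 g0_gt0 backtrack; elim=> [|l IH] lm.
  by split; rewrite //= ge_min lexx.
have [t0 t_le t_ge] := IH (ltnW lm).
have [next0 next_le next_ge] := backtrack_step_bounds t0 nu0 nu1 th01 (backtrack l lm)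
  (ratio_le_lipschitz _ gf_lip gx t0).
by split => //; [exact: le_trans t_le | rewrite ge_min next_ge orbT].
Qed.

Lemma projI_itv (R : realType) (a b t : R) : a <= b -> a <= projI a b t <= b.
Proof. by move=> ab; rewrite /projI le_max lexx ge_max ab ge_min lexx. Qed.

Lemma stepsize_floor_le (R : realType) (hlo hhi nu theta L g : R) :
  hlo <= g -> 1 <= hhi -> 0 < L -> 0 <= nu -> 0 <= theta ->
  Num.min hlo (nu * theta / (hhi * Num.max L 1 ^+ 2)) <= Num.min g (theta * nu / L).
Proof.
move=> hlo_g hhi1 L0 nu0 th0; set M := Num.max L 1.
have M1 : 1 <= M by rewrite le_max lexx orbT.
have LM : L <= hhi * M ^+ 2.
  have LM : L <= M by rewrite le_max lexx.
  have M0 : 0 <= M := le_trans ler01 M1.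
  have : 0 <= (hhi - 1) * (M * M) by rewrite mulr_ge0 ?subr_ge0 ?mulr_ge0.
  have : 0 <= M * (M - 1) by rewrite mulr_ge0 ?subr_ge0.
  rewrite expr2; lra.
have hM0 : 0 < hhi * M ^+ 2 := lt_le_trans L0 LM.
rewrite le_min !ge_min hlo_g /= [nu * theta]mulrC; apply/orP; right.
by apply: ler_wpM2l; rewrite ?mulr_ge0 // lef_pV2 ?posrE.
Qed.

Section Algorithm3Iterates.
Context {R : realType} {n : nat}.
Context {gf : 'rV[R]_n -> 'rV[R]_n} {L mu nu hlo hhi beta theta tau eta : R}.
Context {x0 : 'rV[R]_n} {g00 : R} {x : nat -> 'rV[R]_n} {g0 h : nat -> R}.
Hypothesis alg : algorithm3 gf L mu nu hlo hhi beta theta tau eta x0 g00 x g0 h.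
Hypotheses (gf_lip : lipschitz_grad gf L) (L_gt0 : 0 < L) (nu_gt0 : 0 < nu) (nu_lt1 : nu < 1)
  (hlo_gt0 : 0 < hlo) (g00_itv : hlo <= g00 <= hhi) (hhi_ge1 : 1 <= hhi)
  (theta01 : 0 < theta < 1).

Local Notation h_min := (Num.min hlo (nu * theta / (hhi * Num.max L 1 ^+ 2))).

Lemma stepsize_floor_gt0 : 0 < h_min.
Proof.
have [th0 _] := andP theta01.
have M0 : 0 < Num.max L 1 by rewrite lt_max ltr01 orbT.
rewrite lt_min hlo_gt0 /= divr_gt0 ?mulr_gt0 ?exprn_gt0 //.
exact: lt_le_trans ltr01 hhi_ge1.
Qed.

Lemma algorithm3_g0_itv k : hlo <= g0 k <= hhi.
Proof.
have [_ [g00E step]] := alg; have [hlo_g00 g00_hhi] := andP g00_itv.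
elim: k => [|k _]; first by rewrite g00E.
have [_ [_ [_ ->]]] := step k.
by case: ifP => _; apply: projI_itv; exact: le_trans g00_hhi.
Qed.

Lemma algorithm3_stepsize_bounds k : [/\ h_min <= h k, 0 < h k & h k <= hhi].
Proof.
have [_ [_ step]] := alg; have [gx [[m [backtrack [_ ->]]] _]] := step k.
have /andP[hlo_g0 g0_hhi] := algorithm3_g0_itv k.
have [t0 t_le t_ge] := trial_bounds gf_lip gx nu_gt0 nu_lt1 theta01
  (lt_le_trans hlo_gt0 hlo_g0) backtrack m (leqnn m).
split => //; last exact: le_trans t_le g0_hhi.
apply: le_trans t_ge.
by apply: stepsize_floor_le => //; [exact: ltW | case/andP: theta01 => /ltW].
Qed.

Lemma algorithm3_dist_decrease f xs k : convex_fun f -> has_gradient f gf -> gf xs = 0 ->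
  L * hhi < 4 -> 0 <= beta <= 1 -> 0 <= eta <= 2 ->
  enorm (x k.+1 - xs) ^+ 2 <= enorm (x k - xs) ^+ 2 - eta * (2 - eta) *
    (((1 - beta) * (1 - L * hhi / 4) + beta * (1 - nu)) / (2 + 2 * beta ^+ 2 * nu ^+ 2)) *
    ((1 - beta) * (1 - L * hhi / 4) + beta * (1 - nu)) * h_min ^+ 2 * enorm (gf (x k)) ^+ 2.
Proof.
move=> f_cvx f_grad xs_min Lh b01 /andP[e0 e2].
have [_ [_ step]] := alg; have [gx [[m [_ [ratio_m hE]]] [-> _]]] := step k.
have [hk_ge hk0 hk_le] := algorithm3_stepsize_bounds k.
apply: le_trans (algorithm3_dist_sqr_le f_cvx f_grad gf_lip L_gt0 xs_min _ _ _ _ gx _ Lh b01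
  nu_lt1 _ (_ : Defs.ratio gf (x k) (h k) <= nu)) _.
- by rewrite hk0 hk_le.
- by rewrite e0 e2.
- by rewrite hE.
have C0 := descent_const_gt0 L_gt0 Lh b01 nu_lt1.
rewrite lerD2l lerN2; apply: ler_wpM2r; first exact: sqr_ge0.
apply: ler_wpM2l; last by rewrite ler_sqr ?nnegrE ?(ltW stepsize_floor_gt0) ?(ltW hk0).
apply: mulr_ge0 (ltW C0); apply: mulr_ge0 (divr_ge0 (ltW C0) (ltW (alpha_denom_gt0 _ _))).
by apply: mulr_ge0; rewrite ?subr_ge0.
Qed.

End Algorithm3Iterates.

Lemma avg_le_of_decrease {R : realFieldType} (a b : nat -> R) (c : R) (K : nat) :
  0 < c -> (forall k, 0 <= a k) -> (forall k, a k.+1 <= a k - c * b k) -> (0 < K)%N ->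
  K%:R^-1 * \sum_(k < K) b k <= a 0%N / (K%:R * c).
Proof.
move=> c0 a_ge0 decr K0.
have telescope k : a k + c * \sum_(i < k) b i <= a 0%N.
  elim: k => [|k IH]; first by rewrite big_ord0 mulr0 addr0.
  by rewrite big_ord_recr /= mulrDr; have := decr k; lra.
have K_gt0 : 0 < K%:R :> R by rewrite ltr0n.
have := telescope K; set S := \sum_(i < K) b i => tK.
rewrite ler_pdivlMr ?mulr_gt0 //.
have -> : K%:R^-1 * S * (K%:R * c) = c * S by field; rewrite gt_eqF.
by have := a_ge0 K; lra.
Qed.

Theorem theorem6 (R : realType) (n : nat) (f : 'rV[R]_n -> R)
  (gf : 'rV[R]_n -> 'rV[R]_n) (L : R)
  (mu nu hlo hhi g00 beta theta tau eta : R) (x0 : 'rV[R]_n)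
  (x : nat -> 'rV[R]_n) (g0 h : nat -> R) :
  convex_fun f -> has_gradient f gf -> 0 < L -> lipschitz_grad gf L ->
  (exists xs, minimizer_set gf xs) ->
  0 < mu -> mu < nu -> nu < 1 ->
  0 < hlo -> hlo < 1 -> 1 <= g00 -> g00 <= hhi -> hhi < 4 / L ->
  0 <= beta <= 1 -> 0 < theta < 1 -> 1 < tau -> 0 < eta < 2 ->
  algorithm3 gf L mu nu hlo hhi beta theta tau eta x0 g00 x g0 h ->
  let alpha_min :=
    ((1 - beta) * (1 - L * hhi / 4) + beta * (1 - nu)) / (2 + 2 * beta ^+ 2 * nu ^+ 2) in
  let kappa4 :=
    eta * (2 - eta) * alpha_min * ((1 - beta) * (1 - L * hhi / 4) + beta * (1 - nu)) in
  let h_min := Num.min hlo (nu * theta / (hhi * (Num.max L 1) ^+ 2)) in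
  forall (xs : 'rV[R]_n) (K : nat), minimizer_set gf xs -> (1 <= K)%N ->
    (K%:R)^-1 * \sum_(k < K) enorm (gf (x k)) ^+ 2
      <= enorm (x0 - xs) ^+ 2 / (K%:R * kappa4 * h_min ^+ 2).
Proof.
move=> f_cvx f_grad L0 gf_lip _ mu0 mu_nu nu1 hlo0 hlo1 g00_1 g00_hhi hhi_L b01 th01 _
  /andP[eta0 eta2] alg alpha_min kappa4 h_min xs K xs_min K1.
have nu0 : 0 < nu := lt_trans mu0 mu_nu.
have Lh : L * hhi < 4 by rewrite mulrC -ltr_pdivlMr.
have hhi1 : 1 <= hhi := le_trans g00_1 g00_hhi.
have g00_itv : hlo <= g00 <= hhi by rewrite g00_hhi (le_trans (ltW hlo1)).
have C0 := descent_const_gt0 L0 Lh b01 nu1.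
have kappa4_gt0 : 0 < kappa4.
  have eta_gt0 : 0 < eta * (2 - eta) by apply: mulr_gt0; lra.
  exact: mulr_gt0 (mulr_gt0 eta_gt0 (divr_gt0 C0 (alpha_denom_gt0 _ _))) C0.
have hmin0 : 0 < h_min := stepsize_floor_gt0 nu0 hlo0 hhi1 th01.
have [x0E _] := alg; rewrite -x0E -mulrA.
apply: (avg_le_of_decrease (fun k => enorm (x k - xs) ^+ 2) (fun k => enorm (gf (x k)) ^+ 2)
  _ K (mulr_gt0 kappa4_gt0 (exprn_gt0 2 hmin0))) K1 => k; first exact: sqr_ge0.
apply: (algorithm3_dist_decrease alg gf_lip L0 nu0 nu1 hlo0 g00_itv hhi1 th01 _ xs k
  f_cvx f_grad xs_min Lh b01).
by rewrite (ltW eta0) (ltW eta2).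
Qed.
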